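(* Let $n,k,d$ be positive integers such that $k^{1/d}$ is an integer. Then $\textsc{sub-pmm}_{n,k}$ is solvable by monotone formulas of size at most $k n^{d k^{1/d}}$ of each of the following types: (I) $\Sigma_{2d}$ formulas with $\bigwedge$-fan-in $k^{1/d}$ (and $\bigvee$-fan-in $n^{k^{1/d}}$); (II) $\Sigma_{d+1}$ formulas, and also $\Pi_{d+1}$ formulas (with fan-in $k^{1/d}n^{k^{1/d}}$).
   Context: An $AC^0$ formula on variables $X_1,\dots,X_N$ is a rooted tree whose leaves are labeled by a constant $0$ or $1$ or a literal $X_i$ or $\neg X_i$ and whose non-leaves (gates) are labeled by $\bigwedge$ or $\bigvee$ (unbounded fan-in). It is monotone if no leaf is labeled $\neg X_i$. Size is the number of leaves labeled by literals; depth is the maximum number of gates on a root-to-leaf path; fan-in (resp. $\bigwedge$-fan-in, $\bigvee$-fan-in) is the maximum number of children of any gate (resp. $\bigwedge$-gate, $\bigvee$-gate). Depth-$0$ formulas (literals) are both $\Sigma_0$ and $\Pi_0$ formulas. For $d\ge1$, a $\Sigma_d$ formula (resp. $\Pi_d$ formula) is either a $\Pi_{d-1}$ formula (resp. $\Sigma_{d-1}$ formula) or a depth-$d$ formula whose output gate is labeled $\bigvee$ (resp. $\bigwedge$). $\textsc{sub-pmm}_{n,k}$: the input is $k$ Boolean matrices $M^{(1)},\dots,M^{(k)}\in\{0,1\}^{n\times n}$ ($kn^2$ variables). A sub-permutation matrix is a $0/1$ matrix with at most one $1$ in each row and column. A formula solves $\textsc{sub-pmm}_{n,k}$ if on every input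 where all $M^{(i)}$ are sub-permutation matrices it outputs $\bigvee_{a_1,\dots,a_{k-1}\in[n]} M^{(1)}_{1,a_1}\wedge M^{(2)}_{a_1,a_2}\wedge\cdots\wedge M^{(k)}_{a_{k-1},1}$. *)

From mathcomp Require Import all_boot.
Set Implicit Arguments. Unset Strict Implicit. Unset Printing Implicit Defensive.

Inductive formula (V : Type) : Type :=
| FConst of bool
| FLit of V & bool
| FAnd of seq (formula V)
| FOr of seq (formula V).
Arguments FConst {V} b.
Arguments FLit {V} v pos.
Arguments FAnd {V} fs.
Arguments FOr {V} fs.

Section Formulas.
Variable V : Type.

Fixpoint eval (a : V -> bool) (f : formula V) : bool :=
  match f with
  | FConst b => b
  | FLit v pos => if pos then a v else ~~ a v
  | FAnd fs => all (eval a) fs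
  | FOr fs => has (eval a) fs
  end.

Fixpoint monotone (f : formula V) : bool :=
  match f with
  | FConst _ => true
  | FLit _ pos => pos
  | FAnd fs | FOr fs => all monotone fs
  end.

Fixpoint fsize (f : formula V) : nat :=
  match f with
  | FConst _ => 0
  | FLit _ _ => 1
  | FAnd fs | FOr fs => sumn (map fsize fs)
  end.

Fixpoint depth (f : formula V) : nat :=
  match f with
  | FConst _ | FLit _ _ => 0
  | FAnd fs | FOr fs => (foldr maxn 0 (map depth fs)).+1
  end.

Fixpoint and_fanin (f : formula V) : nat :=
  match f with
  | FConst _ | FLit _ _ => 0
  | FAnd fs => maxn (size fs) (foldr maxn 0 (map and_fanin fs))
  | FOr fs => foldr maxn 0 (map and_fanin fs)
  end.

Fixpoint or_fanin (f : formula V) : nat :=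
  match f with
  | FConst _ | FLit _ _ => 0
  | FAnd fs => foldr maxn 0 (map or_fanin fs)
  | FOr fs => maxn (size fs) (foldr maxn 0 (map or_fanin fs))
  end.

Definition fanin (f : formula V) : nat := maxn (and_fanin f) (or_fanin f).

Definition is_or_gate (f : formula V) : bool :=
  if f is FOr _ then true else false.
Definition is_and_gate (f : formula V) : bool :=
  if f is FAnd _ then true else false.

Fixpoint is_sigma (d : nat) (f : formula V) : bool :=
  match d with
  | 0 => depth f == 0
  | d'.+1 => is_pi d' f || ((depth f == d) && is_or_gate f)
  end
with is_pi (d : nat) (f : formula V) : bool :=
  match d with
  | 0 => depth f == 0
  | d'.+1 => is_sigma d' f || ((depth f == d) && is_and_gate f)
  end.

End Formulas.

(* SUB-PMM_{n,k}: variables are M^{(i)}_{r,c} for i : 'I_k, r c : 'I_n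
   (row/column index 1 of the paper is the ordinal 0). *)
Definition pmm_var (n k : nat) := ('I_k * 'I_n * 'I_n)%type.

Definition entry (n k : nat) (a : pmm_var n k -> bool) (i : 'I_k) (r c : 'I_n)
  : bool := a (i, r, c).

Definition sub_perm_input (n k : nat) (a : pmm_var n k -> bool) : Prop :=
  forall i : 'I_k,
    (forall r c c', entry a i r c -> entry a i r c' -> c = c') /\
    (forall r r' c, entry a i r c -> entry a i r' c -> r = r').

(* OR over a_1..a_{k-1} in [n] of M1_{1,a1} /\ M2_{a1,a2} /\ ... /\ Mk_{a_{k-1},1},
   written with a path p : 'I_(k+1) -> 'I_n, p_0 = p_k = 1 (ordinal 0). *)
Definition pmm_output (n k : nat) (a : pmm_var n k -> bool) : bool :=
  [exists p : {ffun 'I_k.+1 -> 'I_n},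
    [&& val (p ord0) == 0, val (p ord_max) == 0 &
        [forall i : 'I_k, entry a i (p (inord i)) (p (inord i.+1))]]].

Definition solves_sub_pmm (n k : nat) (f : formula (pmm_var n k)) : Prop :=
  forall a : pmm_var n k -> bool, sub_perm_input a -> eval a f = pmm_output a.

(* A walk of length [t * m] through a sequence of 0/1 matrices is a walk of
   length [t] through the blocks of [m] consecutive matrices.  Expanding "there
   is a walk of length [t] from u to v" as a DNF ([n ^ (t - 1)] terms of [t]
   entries) or, when every row has at most one 1, as a CNF (at most [t * n ^ t]
   entries in all, and fewer than [n ^ t] clauses if [n > 1]), and substituting
   these expansions for the entries recursively over [d] levels, computes
   SUB-PMM for [k = t ^ d] with size at most [(t * n ^ t) ^ d = k * n ^ (d * t)].
   DNFs at every level give a Sigma_(2d) formula with AND-fan-in [t].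
   Alternating DNF and CNF levels makes gates of the same kind meet between
   levels; merging them leaves depth [d + 1] and fan-in at most [t * n ^ t].
   For [n = 1] the merged AND-gates would have fan-in [t ^ 2], but then the
   output is the AND of all [k] variables, computed by a balanced AND-tree of
   fan-in [t]. *)

From mathcomp Require Import all_boot.
From mathcomp Require Import zify.
Set Implicit Arguments. Unset Strict Implicit. Unset Printing Implicit Defensive.

Lemma has_flatten (T : Type) (p : pred T) (ss : seq (seq T)) :
  has p (flatten ss) = has (has p) ss.
Proof. by elim: ss => //= s ss IH; rewrite has_cat IH. Qed.

Lemma all_flatten (T : Type) (p : pred T) (ss : seq (seq T)) :
  all p (flatten ss) = all (all p) ss.
Proof. by elim: ss => //= s ss IH; rewrite all_cat IH. Qed.

Lemma sumn_map_const (T : eqType) (g : T -> nat) c (s : seq T) :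
  {in s, forall x, g x = c} -> sumn (map g s) = size s * c.
Proof.
elim: s => //= x s IH gc; rewrite mulSn gc ?mem_head // IH // => y ys.
by rewrite gc // in_cons ys orbT.
Qed.

Lemma leq_sumn_map (T : eqType) (g : T -> nat) B (s : seq T) :
  {in s, forall x, g x <= B} -> sumn (map g s) <= size s * B.
Proof.
elim: s => //= x s IH gB; rewrite mulSn leq_add ?gB ?mem_head // IH // => y ys.
by rewrite gB // in_cons ys orbT.
Qed.

Lemma has_enum_ord n (p : pred 'I_n) : has p (enum 'I_n) = [exists w, p w].
Proof. by apply/hasP/existsP => [[w _ pw]|[w pw]]; exists w; rewrite ?mem_enum. Qed.

Lemma all_enum_ord n (p : pred 'I_n) : all p (enum 'I_n) = [forall w, p w].
Proof. by apply/allP/forallP => [pw w|pw w _]; [apply: pw; rewrite mem_enum|]. Qed.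

Lemma size_flatten_flatten (T : Type) (X : seq (seq (seq T))) :
  size (flatten (flatten X)) = sumn [seq size (flatten x) | x <- X].
Proof. by elim: X => //= x X IH; rewrite flatten_cat size_cat IH. Qed.

Lemma size_flatten_map_cat (T : Type) (s : seq T) (L : seq (seq T)) :
  size (flatten [seq s ++ C | C <- L]) = size L * size s + size (flatten L).
Proof. by elim: L => //= C L IH; rewrite !size_cat IH mulSn; lia. Qed.

Lemma geometric_sum n s : 0 < n -> n.-1 * \sum_(i < s) n ^ i + 1 = n ^ s.
Proof.
move=> n0; elim: s => [|s IH]; first by rewrite big_ord0 muln0.
rewrite big_ord_recr /= mulnDr addnAC IH expnS.
by case: n n0 {IH} => // m _; rewrite mulSn addnC.
Qed.

Lemma foldr_maxn_leq (T : Type) (g : T -> nat) (s : seq T) B :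
  (foldr maxn 0 (map g s) <= B) = all (fun x => g x <= B) s.
Proof. by elim: s => //= x s IH; rewrite geq_max IH. Qed.

Lemma foldr_maxn_const (T : Type) (g : T -> nat) (s : seq T) D :
  0 < size s -> all (fun x => g x == D) s -> foldr maxn 0 (map g s) = D.
Proof.
elim: s => //= x [|y s] IH _ /andP[/eqP -> gD]; first by rewrite maxn0.
by rewrite IH // maxnn.
Qed.

Lemma all_iota_blocks (P : pred nat) lo m j0 t :
  all (fun j => all P (iota (lo + j * m) m)) (iota j0 t) = all P (iota (lo + j0 * m) (t * m)).
Proof.
elim: t j0 => [|t IH] j0; first by rewrite mul0n.
by rewrite /= IH [t.+1 * m]mulSn iotaD all_cat mulSn [m + _]addnC addnA.
Qed.

Section Walks.
Variable n : nat.
Implicit Types (A : nat -> rel 'I_n) (u v w : 'I_n).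

Fixpoint walk A (lo m : nat) u v : bool :=
  if m is m'.+1 then [exists w, A lo u w && walk A lo.+1 m' w v] else u == v.

Lemma walkS A lo m u v :
  walk A lo m.+1 u v = [exists w, A lo u w && walk A lo.+1 m w v].
Proof. by []. Qed.

Lemma walk1 A lo u v : walk A lo 1 u v = A lo u v.
Proof.
by apply/existsP/idP => [[w /andP[Auw /eqP <-]] //|Auv]; exists v; rewrite Auv /=.
Qed.

Lemma walkD A lo m1 m2 u v :
  walk A lo (m1 + m2) u v = [exists w, walk A lo m1 u w && walk A (lo + m1) m2 w v].
Proof.
elim: m1 lo u => [|m1 IH] lo u /=.
  rewrite addn0; apply/idP/existsP => [Auv|[w /andP[/eqP -> //]]].
  by exists u; rewrite eqxx.
apply/existsP/existsP => [[w /andP[Auw]]|[w' /andP[/existsP[w /andP[Auw Aww']] Aw'v]]].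
  rewrite IH => /existsP[w' /andP[Aww' Aw'v]].
  by exists w'; rewrite -addSnnS Aw'v andbT; apply/existsP; exists w; rewrite Auw.
by exists w; rewrite Auw IH; apply/existsP; exists w'; rewrite Aww' addSnnS.
Qed.

Lemma walk_blocks A lo m j0 t u v :
  walk (fun j => walk A (lo + j * m) m) j0 t u v = walk A (lo + j0 * m) (t * m) u v.
Proof.
elim: t j0 u => [|t IH] j0 u; first by rewrite mul0n.
rewrite mulSn walkD /=; apply: eq_existsb => w.
by rewrite IH mulSn [m + _]addnC addnA.
Qed.

Definition rows_functional A := forall j u w w', A j u w -> A j u w' -> w = w'.

Lemma walk_functional A lo m u v v' :
  rows_functional A -> walk A lo m u v -> walk A lo m u v' -> v = v'.
Proof.
move=> fA; elim: m lo u => [|m IH] lo u /=; first by move=> /eqP <- /eqP.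
move=> /existsP[w /andP[Auw wv]] /existsP[w' /andP[Auw' w'v']].
by move: w'v'; rewrite -(fA _ _ _ _ Auw Auw'); apply: IH.
Qed.

Lemma walkP A lo m u v :
  reflect (exists p : nat -> 'I_n,
             [/\ p 0 = u, p m = v & forall i, i < m -> A (lo + i) (p i) (p i.+1)])
          (walk A lo m u v).
Proof.
elim: m lo u => [|m IH] lo u /=.
  by apply: (iffP eqP) => [<-|[p [<- <-]]] //; exists (fun=> u).
apply: (iffP existsP) => [[w /andP[Auw /IH[p [p0 pm Ap]]]]|[p [p0 pm Ap]]].
  exists (fun i => if i is i'.+1 then p i' else u); split=> // -[|i] im.
    by rewrite addn0 p0.
  by rewrite -addSnnS; apply: Ap.
exists (p 1); have := Ap 0 isT; rewrite addn0 p0 => -> /=.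
by apply/IH; exists (p \o succn); split=> // i im; rewrite addSnnS; apply: Ap.
Qed.

End Walks.

Lemma walk_ord1 (A : nat -> rel 'I_1) lo m u v :
  walk A lo m u v = all (fun i => A i ord0 ord0) (iota lo m).
Proof.
have all_ord0 (w : 'I_1) : w = ord0 by apply: val_inj; case: w => -[].
elim: m lo u => [|m IH] lo u /=; first by rewrite (all_ord0 u) (all_ord0 v).
rewrite (all_ord0 u); apply/existsP/andP => [[w]|[A0 Am]].
  by rewrite (all_ord0 w) IH => /andP[].
by exists ord0; rewrite A0 IH.
Qed.

Section PathNormalForms.
Variable n : nat.
Implicit Types (A : nat -> rel 'I_n) (u v w : 'I_n).

Definition edge := (nat * 'I_n * 'I_n)%type.

Definition at_edge (T : Type) (F : nat -> 'I_n -> 'I_n -> T) (x : edge) : T :=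
  F x.1.1 x.1.2 x.2.
Arguments at_edge {T} F x /.

Fixpoint path_dnf (s lo : nat) u v : seq (seq edge) :=
  if s is s'.+1 then
    flatten [seq [seq (lo, u, w) :: T | T <- path_dnf s' lo.+1 w v] | w <- enum 'I_n]
  else [:: [:: (lo, u, v)]].

Definition detour_edges lo u w : seq edge := [seq (lo, u, a) | a <- enum 'I_n & a != w].

(* If row [u] of matrix [lo] has at most one 1, a walk u -> w -> ... -> v
   exists iff u has an out-edge and, for every w, either u has an out-edge other
   than (u, w) or there is a walk from w to v; distributing gives these clauses. *)
Fixpoint path_cnf (s lo : nat) u v : seq (seq edge) :=
  if s is s'.+1 then
    [seq (lo, u, w) | w <- enum 'I_n] ::
    flatten [seq [seq detour_edges lo u w ++ C | C <- path_cnf s' lo.+1 w v] | w <- enum 'I_n]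
  else [:: [:: (lo, u, v)]].

Lemma path_dnfP A s lo u v :
  has (all (at_edge A)) (path_dnf s lo u v) = walk A lo s.+1 u v.
Proof.
elim: s lo u => [|s IH] lo u; first by rewrite walk1 /= andbT orbF.
rewrite [LHS]/= walkS has_flatten has_map has_enum_ord; apply: eq_existsb => w.
rewrite -IH /preim /= has_map.
by case Auw : (A lo u w); [apply: eq_has => T | apply/hasP => -[T _]]; rewrite /= Auw.
Qed.

Lemma has_detour_edges A lo u w :
  has (at_edge A) (detour_edges lo u w) = [exists a, (a != w) && A lo u a].
Proof.
rewrite has_map; apply/hasP/existsP => [[a]|[a /andP[aw Aua]]].
  by rewrite mem_filter => /andP[aw _] Aua; exists a; rewrite aw.
by exists a; rewrite // mem_filter mem_enum aw.
Qed.

Lemma path_cnfP A s lo u v : rows_functional A ->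
  all (has (at_edge A)) (path_cnf s lo u v) = walk A lo s.+1 u v.
Proof.
move=> fA; elim: s lo u => [|s IH] lo u; first by rewrite walk1 /= orbF andbT.
have clauses_w w : all (has (at_edge A))
      [seq detour_edges lo u w ++ C | C <- path_cnf s lo.+1 w v]
    = [exists a, (a != w) && A lo u a] || walk A lo.+1 s.+1 w v.
  rewrite all_map -IH -has_detour_edges.
  by elim: (path_cnf s lo.+1 w v) => [|C Cs IHC] /=; rewrite ?orbT // has_cat IHC orb_andr.
rewrite [LHS]/= walkS has_map has_enum_ord all_flatten all_map all_enum_ord.
rewrite (eq_forallb clauses_w).
apply/andP/existsP => [[/existsP[w /= Auw] /forallP all_w]|[w /andP[Auw wv]]].
  exists w; rewrite Auw /=; case/orP: (all_w w) => // /existsP[a /andP[aw Aua]].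
  by rewrite (fA _ _ _ _ Aua Auw) eqxx in aw.
split; first by apply/existsP; exists w.
apply/forallP => w'; case: (eqVneq w' w) => [->|w'w]; first by rewrite wv orbT.
by apply/orP; left; apply/existsP; exists w; rewrite eq_sym w'w.
Qed.

Lemma size_path_dnf s lo u v : size (path_dnf s lo u v) = n ^ s.
Proof.
elim: s lo u => [|s IH] lo u //=.
rewrite size_flatten /shape -map_comp (sumn_map_const (c := n ^ s)) ?size_enum_ord ?expnS //.
by move=> w _ /=; rewrite size_map IH.
Qed.

Lemma size_path_dnf_term s lo u v T : T \in path_dnf s lo u v -> size T = s.+1.
Proof.
elim: s lo u T => [|s IH] lo u T /=; first by rewrite inE => /eqP ->.
by case/flatten_mapP => w _ /mapP[T' /IH sT' ->] /=; rewrite sT'.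
Qed.

Lemma size_flatten_path_dnf s lo u v : size (flatten (path_dnf s lo u v)) = s.+1 * n ^ s.
Proof.
rewrite size_flatten (sumn_map_const (c := s.+1)) ?size_path_dnf 1?mulnC //.
exact: size_path_dnf_term.
Qed.

Lemma path_dnf_nonempty s lo u v :
  0 < n -> (0 < size (path_dnf s lo u v)) && all (fun T => 0 < size T) (path_dnf s lo u v).
Proof.
by move=> n0; rewrite size_path_dnf expn_gt0 n0; apply/allP => T /size_path_dnf_term ->.
Qed.

Lemma size_detour_edges lo u w : size (detour_edges lo u w) = n.-1.
Proof.
rewrite size_map size_filter.
have := count_predC (fun a => a != w) (enum 'I_n).
have -> : count (predC (fun a => a != w)) (enum 'I_n) = count_mem w (enum 'I_n).
  by apply: eq_count => a; rewrite /= negbK.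
by rewrite count_uniq_mem ?enum_uniq // mem_enum size_enum_ord addn1; lia.
Qed.

Lemma size_path_cnf s lo u v : size (path_cnf s lo u v) = \sum_(i < s.+1) n ^ i.
Proof.
elim: s lo u => [|s IH] lo u; first by rewrite big_ord1.
rewrite /= size_flatten /shape -map_comp (sumn_map_const (c := \sum_(i < s.+1) n ^ i)).
  rewrite size_enum_ord [RHS]big_ord_recl expn0 big_distrr /= add1n; congr _.+1.
  by apply: eq_bigr => i _; rewrite expnS.
by move=> w _ /=; rewrite size_map IH.
Qed.

Lemma size_flatten_path_cnf s lo u v : 0 < n ->
  size (flatten (path_cnf s lo u v)) = s * n ^ s.+1 + n ^ s.
Proof.
move=> n0; elim: s lo u => [|s IH] lo u //=.
rewrite size_cat size_map size_enum_ord size_flatten_flatten -map_comp.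
rewrite (sumn_map_const (c := n.-1 * \sum_(i < s.+1) n ^ i + (s * n ^ s.+1 + n ^ s))).
  rewrite size_enum_ord; have := geometric_sum s.+1 n0.
  by rewrite !expnS; case: n n0 => // m _ /=; nia.
move=> w _ /=; rewrite size_flatten_map_cat size_detour_edges size_path_cnf IH.
by rewrite mulnC.
Qed.

Lemma size_path_cnf_lt s lo u v : 1 < n -> size (path_cnf s lo u v) < n ^ s.+1.
Proof.
move=> n1; rewrite -(geometric_sum s.+1 (ltnW n1)) size_path_cnf addn1 ltnS.
by rewrite leq_pmull // -subn1 subn_gt0.
Qed.

Lemma size_path_cnf_clause s lo u v C : 0 < n ->
  C \in path_cnf s lo u v -> 0 < size C <= s.+1 * n.
Proof.
move=> n0; elim: s lo u C => [|s IH] lo u C /=.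
  by rewrite inE => /eqP ->; rewrite mul1n.
rewrite inE => /predU1P[->|/flatten_mapP[w _ /mapP[C' /IH sC' ->]]].
  by rewrite size_map size_enum_ord n0 mulSn leq_addr.
rewrite size_cat size_detour_edges; move: sC'; set c := size C'; rewrite !mulSn; lia.
Qed.

Lemma path_cnf_nonempty s lo u v :
  0 < n -> (0 < size (path_cnf s lo u v)) && all (fun C => 0 < size C) (path_cnf s lo u v).
Proof.
move=> n0; apply/andP; split; first by case: s.
by apply/allP => C /(size_path_cnf_clause n0) /andP[].
Qed.

End PathNormalForms.

Section FormulaFacts.
Variable V : Type.
Implicit Types (f : formula V) (fs : seq (formula V)).

Lemma and_fanin_FAnd fs B :
  (and_fanin (FAnd fs) <= B) = (size fs <= B) && all (fun f => and_fanin f <= B) fs.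
Proof. by rewrite /= geq_max foldr_maxn_leq. Qed.

Lemma and_fanin_FOr fs B : (and_fanin (FOr fs) <= B) = all (fun f => and_fanin f <= B) fs.
Proof. exact: foldr_maxn_leq. Qed.

Lemma or_fanin_FAnd fs B : (or_fanin (FAnd fs) <= B) = all (fun f => or_fanin f <= B) fs.
Proof. exact: foldr_maxn_leq. Qed.

Lemma or_fanin_FOr fs B :
  (or_fanin (FOr fs) <= B) = (size fs <= B) && all (fun f => or_fanin f <= B) fs.
Proof. by rewrite /= geq_max foldr_maxn_leq. Qed.

Lemma fanin_FAnd fs B :
  (fanin (FAnd fs) <= B) = (size fs <= B) && all (fun f => fanin f <= B) fs.
Proof.
rewrite /fanin geq_max and_fanin_FAnd or_fanin_FAnd -andbA -all_predI.
by congr (_ && _); apply: eq_all => f; rewrite /= geq_max.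
Qed.

Lemma fanin_FOr fs B :
  (fanin (FOr fs) <= B) = (size fs <= B) && all (fun f => fanin f <= B) fs.
Proof.
rewrite /fanin geq_max and_fanin_FOr or_fanin_FOr andbCA -all_predI.
by congr (_ && _); apply: eq_all => f; rewrite /= geq_max.
Qed.

Definition conjuncts f := if f is FAnd fs then fs else [:: f].
Definition disjuncts f := if f is FOr fs then fs else [:: f].

Lemma eval_conjuncts a f : all (eval a) (conjuncts f) = eval a f.
Proof. by case: f => //= *; rewrite andbT. Qed.

Lemma eval_disjuncts a f : has (eval a) (disjuncts f) = eval a f.
Proof. by case: f => //= *; rewrite orbF. Qed.

Lemma fsize_conjuncts f : sumn (map (@fsize V) (conjuncts f)) = fsize f.
Proof. by case: f => //= *; rewrite addn0. Qed.

Lemma fsize_disjuncts f : sumn (map (@fsize V) (disjuncts f)) = fsize f.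
Proof. by case: f => //= *; rewrite addn0. Qed.

Lemma fanin_conjuncts f B : fanin f <= B -> all (fun g => fanin g <= B) (conjuncts f).
Proof. by case: f => [b|v p|fs|fs] /=; rewrite ?andbT // fanin_FAnd => /andP[]. Qed.

Lemma fanin_disjuncts f B : fanin f <= B -> all (fun g => fanin g <= B) (disjuncts f).
Proof. by case: f => [b|v p|fs|fs] /=; rewrite ?andbT // fanin_FOr => /andP[]. Qed.

Fixpoint layered (b : bool) (D : nat) f : bool :=
  if D is D'.+1 then
    match f with
    | FOr fs => b && (0 < size fs) && all (layered (~~ b) D') fs
    | FAnd fs => ~~ b && (0 < size fs) && all (layered (~~ b) D') fs
    | _ => false
    end
  else if f is FLit _ pos then pos else false.

Lemma layered_depth b D f : layered b D f -> depth f = D.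
Proof.
elim: D b f => [|D IH] b [] //= fs /andP[/andP[_ fs0] fsD]; congr _.+1;
  by apply: foldr_maxn_const => //; apply: sub_all fsD => g /IH ->.
Qed.

Lemma layered_monotone b D f : layered b D f -> monotone f.
Proof.
elim: D b f => [|D IH] b [] //= fs /andP[_ fsD];
  by apply: sub_all fsD => g; apply: IH.
Qed.

Lemma layered_sigma D f : layered true D f -> is_sigma D f.
Proof.
case: D => [|D] fD; rewrite /= (layered_depth fD) eqxx //.
by case: f fD => //= *; rewrite orbT.
Qed.

Lemma layered_pi D f : layered false D f -> is_pi D f.
Proof.
case: D => [|D] fD; rewrite /= (layered_depth fD) eqxx //.
by case: f fD => //= *; rewrite orbT.
Qed.

Lemma layered_and_conjuncts D f : layered false D.+1 f ->
  (0 < size (conjuncts f)) && all (layered true D) (conjuncts f).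
Proof. by case: f => //= fs /andP[]. Qed.

Lemma layered_or_disjuncts D f : layered true D.+1 f ->
  (0 < size (disjuncts f)) && all (layered false D) (disjuncts f).
Proof. by case: f => //= fs /andP[]. Qed.

Section NormalForms.
Variables (X : eqType) (F : X -> formula V).

Definition dnf_formula (D : seq (seq X)) : formula V :=
  FOr [seq FAnd (flatten [seq conjuncts (F x) | x <- T]) | T <- D].

Definition cnf_formula (D : seq (seq X)) : formula V :=
  FAnd [seq FOr (flatten [seq disjuncts (F x) | x <- C]) | C <- D].

Lemma eval_dnf_formula a D :
  eval a (dnf_formula D) = has (all (fun x => eval a (F x))) D.
Proof.
rewrite /= has_map; apply: eq_has => T /=; rewrite all_flatten all_map.
by apply: eq_all => x; apply: eval_conjuncts.
Qed.

Lemma eval_cnf_formula a D :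
  eval a (cnf_formula D) = all (has (fun x => eval a (F x))) D.
Proof.
rewrite /= all_map; apply: eq_all => C /=; rewrite has_flatten has_map.
by apply: eq_has => x; apply: eval_disjuncts.
Qed.

Lemma fsize_dnf_formula D : fsize (dnf_formula D) = sumn [seq fsize (F x) | x <- flatten D].
Proof.
rewrite /= -map_comp; elim: D => //= T D ->; rewrite map_cat sumn_cat; congr (_ + _).
by elim: T => //= x T IH; rewrite map_cat sumn_cat IH fsize_conjuncts.
Qed.

Lemma fsize_cnf_formula D : fsize (cnf_formula D) = sumn [seq fsize (F x) | x <- flatten D].
Proof.
rewrite /= -map_comp; elim: D => //= C D ->; rewrite map_cat sumn_cat; congr (_ + _).
by elim: C => //= x C IH; rewrite map_cat sumn_cat IH fsize_disjuncts.
Qed.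

Lemma fanin_dnf_formula D B :
  size D <= B -> all (fun T => size (flatten [seq conjuncts (F x) | x <- T]) <= B) D ->
  (forall x, fanin (F x) <= B) -> fanin (dnf_formula D) <= B.
Proof.
move=> DB TB FB; rewrite fanin_FOr size_map DB all_map; apply/allP => T TD /=.
rewrite fanin_FAnd (allP TB T TD) all_flatten all_map.
by apply/allP => x _; apply: fanin_conjuncts.
Qed.

Lemma fanin_cnf_formula D B :
  size D <= B -> all (fun C => size (flatten [seq disjuncts (F x) | x <- C]) <= B) D ->
  (forall x, fanin (F x) <= B) -> fanin (cnf_formula D) <= B.
Proof.
move=> DB CB FB; rewrite fanin_FAnd size_map DB all_map; apply/allP => C CD /=.
rewrite fanin_FOr (allP CB C CD) all_flatten all_map.
by apply/allP => x _; apply: fanin_disjuncts.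
Qed.

Lemma and_or_fanin_dnf_formula D Ba Bo :
  (forall x, conjuncts (F x) = [:: F x]) ->
  size D <= Bo -> all (fun T => size T <= Ba) D ->
  (forall x, (and_fanin (F x) <= Ba) && (or_fanin (F x) <= Bo)) ->
  (and_fanin (dnf_formula D) <= Ba) && (or_fanin (dnf_formula D) <= Bo).
Proof.
move=> F1 DBo TBa FB; rewrite and_fanin_FOr or_fanin_FOr size_map DBo !all_map -all_predI.
apply/allP => T TD /=; have -> : flatten [seq conjuncts (F x) | x <- T] = map F T.
  by elim: T {TD} => //= x T ->; rewrite F1.
rewrite and_fanin_FAnd or_fanin_FAnd size_map (allP TBa T TD) !all_map -all_predI.
by apply/allP => x _; apply: FB.
Qed.

Lemma layered_dnf_formula D Ds :
  (forall x, (0 < size (conjuncts (F x))) && all (layered true D) (conjuncts (F x))) ->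
  (0 < size Ds) && all (fun T => 0 < size T) Ds -> layered true D.+2 (dnf_formula Ds).
Proof.
move=> FD /andP[Ds0 T0]; rewrite /= size_map Ds0 all_map; apply/allP => T TDs /=.
rewrite all_flatten all_map; apply/andP; split; last first.
  by apply/allP => x _; case/andP: (FD x).
have := allP T0 T TDs; case: T {TDs} => // x T _.
by rewrite /= size_cat addn_gt0; case/andP: (FD x) => ->.
Qed.

Lemma layered_cnf_formula D Cs :
  (forall x, (0 < size (disjuncts (F x))) && all (layered false D) (disjuncts (F x))) ->
  (0 < size Cs) && all (fun C => 0 < size C) Cs -> layered false D.+2 (cnf_formula Cs).
Proof.
move=> FD /andP[Cs0 C0]; rewrite /= size_map Cs0 all_map; apply/allP => C CCs /=.
rewrite all_flatten all_map; apply/andP; split; last first.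
  by apply/allP => x _; case/andP: (FD x).
have := allP C0 C CCs; case: C {CCs} => // x C _.
by rewrite /= size_cat addn_gt0; case/andP: (FD x) => ->.
Qed.

End NormalForms.

End FormulaFacts.

Section WalkFormulas.
Variables (V : Type) (n : nat) (lit : nat -> 'I_n -> 'I_n -> V) (s : nat).
Local Notation t := s.+1.

(* Level [e.+1] treats each block of [t ^ e] consecutive matrices as a single
   matrix whose entries are computed at level [e]; [b] selects the DNF or the CNF
   expansion of the walk through the [t] blocks and [next b] the selection one
   level down. *)
Fixpoint walk_formula (next : bool -> bool) (b : bool) (e lo : nat) (u v : 'I_n) : formula V :=
  if e is e'.+1 then
    let F j := walk_formula next (next b) e' (lo + j * t ^ e') in
    if b then dnf_formula (at_edge F) (path_dnf s 0 u v)
    else cnf_formula (at_edge F) (path_cnf s 0 u v)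
  else FLit (lit lo u v) true.

Lemma eval_walk_formula a next b e lo u v :
  rows_functional (fun i r c => a (lit i r c)) ->
  eval a (walk_formula next b e lo u v) = walk (fun i r c => a (lit i r c)) lo (t ^ e) u v.
Proof.
move=> fA; elim: e next b lo u v => [|e IH] next b lo u v; first by rewrite walk1.
have := walk_blocks (fun i r c => a (lit i r c)) lo (t ^ e) 0 t u v.
rewrite mul0n addn0 -expnS => <-; case: b.
  rewrite eval_dnf_formula -path_dnfP.
  by apply: eq_has => T; apply: eq_all => x /=; apply: IH.
rewrite eval_cnf_formula -path_cnfP => [|j w w' w'']; last exact: walk_functional.
by apply: eq_all => C; apply: eq_has => x /=; apply: IH.
Qed.

Lemma fsize_walk_formula next b e lo u v :
  0 < n -> fsize (walk_formula next b e lo u v) <= (t * n ^ t) ^ e.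
Proof.
move=> n0; have ns_nt : n ^ s <= n ^ t by rewrite leq_pexp2l.
elim: e next b lo u v => [|e IH] next b lo u v //=.
rewrite expnS.
case: b; [rewrite fsize_dnf_formula | rewrite fsize_cnf_formula];
  apply: leq_trans (leq_sumn_map (B := (t * n ^ t) ^ e) _) _ => [x _|]; try exact: IH;
  rewrite leq_mul2r; apply/orP; right.
  by rewrite size_flatten_path_dnf leq_mul2l ns_nt orbT.
by rewrite size_flatten_path_cnf // [t * _]mulSn addnC leq_add2r.
Qed.

Lemma conjuncts_walk_formula_id e lo u v :
  conjuncts (walk_formula id true e lo u v) = [:: walk_formula id true e lo u v].
Proof. by case: e. Qed.

Lemma layered_walk_formula_id e lo u v :
  0 < n -> layered true (2 * e) (walk_formula id true e lo u v).
Proof.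
move=> n0; elim: e lo u v => [|e IH] lo u v //.
rewrite mulnS; apply: layered_dnf_formula.
- by move=> x; rewrite conjuncts_walk_formula_id /= IH.
- exact: path_dnf_nonempty.
Qed.

Lemma fanin_walk_formula_id e lo u v :
  (and_fanin (walk_formula id true e lo u v) <= t) &&
  (or_fanin (walk_formula id true e lo u v) <= n ^ s).
Proof.
elim: e lo u v => [|e IH] lo u v //=.
apply: and_or_fanin_dnf_formula => [x|||x]; rewrite /= ?conjuncts_walk_formula_id ?IH //.
  by rewrite size_path_dnf.
by apply/allP => T /size_path_dnf_term ->.
Qed.

Lemma layered_walk_formula_negb b e lo u v :
  0 < n -> layered b e.+2 (walk_formula negb b e.+1 lo u v).
Proof.
move=> n0; elim: e b lo u v => [|e IH] [] lo u v.
- by apply: layered_dnf_formula (path_dnf_nonempty _ _ _ _ n0).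
- by apply: layered_cnf_formula (path_cnf_nonempty _ _ _ _ n0).
- apply: layered_dnf_formula (path_dnf_nonempty _ _ _ _ n0) => x /=.
  exact: layered_and_conjuncts (IH _ _ _ _).
- apply: layered_cnf_formula (path_cnf_nonempty _ _ _ _ n0) => x /=.
  exact: layered_or_disjuncts (IH _ _ _ _).
Qed.

Lemma size_conjuncts_walk_formula_negb e lo u v :
  1 < n -> size (conjuncts (walk_formula negb false e lo u v)) <= n ^ t.
Proof.
move=> n1; case: e => [|e] /=; first by rewrite expn_gt0 ltnW.
by rewrite size_map ltnW // size_path_cnf_lt.
Qed.

Lemma size_disjuncts_walk_formula_negb e lo u v :
  0 < n -> size (disjuncts (walk_formula negb true e lo u v)) <= n ^ s.
Proof.
move=> n0; case: e => [|e] /=; first by rewrite expn_gt0 n0.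
by rewrite size_map size_path_dnf.
Qed.

Lemma fanin_walk_formula_negb b e lo u v :
  1 < n -> fanin (walk_formula negb b e lo u v) <= t * n ^ t.
Proof.
move=> n1; have n0 := ltnW n1; have ns_nt : n ^ s <= n ^ t by rewrite leq_pexp2l.
elim: e b lo u v => [|e IH] b lo u v //.
case: b; [apply: fanin_dnf_formula | apply: fanin_cnf_formula] => [||x||| x];
  try exact: IH.
- by rewrite size_path_dnf (leq_trans ns_nt) // leq_pmull.
- apply/allP => T /size_path_dnf_term sT; rewrite size_flatten /shape -map_comp.
  apply: leq_trans (leq_sumn_map (B := n ^ t) _) _ => [x _|]; last by rewrite sT.
  exact: size_conjuncts_walk_formula_negb.
- by rewrite ltnW // (leq_trans (size_path_cnf_lt _ _ _ _ n1)) // leq_pmull.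
- apply/allP => C /(size_path_cnf_clause n0) /andP[_ sC].
  rewrite size_flatten /shape -map_comp.
  apply: leq_trans (leq_sumn_map (B := n ^ s) _) _ => [x _|].
    exact: size_disjuncts_walk_formula_negb.
  by rewrite expnS mulnA leq_mul2r sC orbT.
Qed.

End WalkFormulas.

Section AndTree.
Variables (V : Type) (t : nat) (x : nat -> V).

Fixpoint and_tree (e lo : nat) : formula V :=
  if e is e'.+1 then FAnd [seq and_tree e' (lo + j * t ^ e') | j <- iota 0 t]
  else FLit (x lo) true.

Lemma eval_and_tree a e lo : eval a (and_tree e lo) = all (fun i => a (x i)) (iota lo (t ^ e)).
Proof.
elim: e lo => [|e IH] lo /=; first by rewrite andbT.
by rewrite all_map (eq_all (fun j => IH _)) all_iota_blocks mul0n addn0 -expnS.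
Qed.

Lemma monotone_and_tree e lo : monotone (and_tree e lo).
Proof. by elim: e lo => //= e IH lo; rewrite all_map; apply/allP => j _ /=. Qed.

Lemma fsize_and_tree e lo : fsize (and_tree e lo) = t ^ e.
Proof.
elim: e lo => //= e IH lo; rewrite -map_comp (sumn_map_const (c := t ^ e)) => [|j _].
  by rewrite size_iota expnS.
exact: IH.
Qed.

Lemma depth_and_tree e lo : 0 < t -> depth (and_tree e lo) = e.
Proof.
move=> t0; elim: e lo => //= e IH lo; congr _.+1; rewrite -map_comp.
by apply: foldr_maxn_const; rewrite ?size_iota //; apply/allP => j _ /=; rewrite IH.
Qed.

Lemma fanin_and_tree e lo : fanin (and_tree e lo) <= t.
Proof.
elim: e lo => //= e IH lo; rewrite fanin_FAnd size_map size_iota leqnn all_map.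
by apply/allP => j _ /=.
Qed.

End AndTree.

Definition pmm_lit {n k : nat} (i : nat) (r c : 'I_n) : pmm_var n k.+1 := (inord i, r, c).

Lemma pmm_output_walk n k (a : pmm_var n.+1 k.+1 -> bool) :
  pmm_output a = walk (fun i r c => a (pmm_lit i r c)) 0 k.+1 ord0 ord0.
Proof.
have inord_nat m (i : 'I_m.+1) j : i = j :> nat -> inord j = i.
  by move=> ij; apply: val_inj; rewrite /= inordK -ij.
apply/existsP/walkP => [[p /and3P[/eqP p0 /eqP pk /forallP pw]]|[p [p0 pk pw]]].
  exists (fun i => p (inord i)); split.
  - by apply: val_inj; rewrite (inord_nat _ ord0).
  - by apply: val_inj; rewrite (inord_nat _ ord_max).
  move=> i ik; have := pw (Ordinal ik).
  by rewrite /entry /pmm_lit add0n (inord_nat _ (Ordinal ik)).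
exists [ffun i : 'I_k.+2 => p i]; rewrite !ffunE p0 pk !eqxx /=.
apply/forallP => i; have ik := ltn_ord i.
rewrite /entry !ffunE !inordK ?ltnS ?(ltnW ik) ?ik //.
by have := pw i ik; rewrite add0n /pmm_lit inord_val.
Qed.

Lemma solves_sub_pmm_walk n k (f : formula (pmm_var n.+1 k.+1)) :
  (forall a, rows_functional (fun i r c => a (pmm_lit i r c)) ->
     eval a f = walk (fun i r c => a (pmm_lit i r c)) 0 k.+1 ord0 ord0) ->
  solves_sub_pmm f.
Proof.
move=> fw a sa; rewrite pmm_output_walk fw // => i r c c'.
exact: (sa (inord i)).1.
Qed.

Lemma expnMn_expn n d t : (t * n ^ t) ^ d = t ^ d * n ^ (d * t).
Proof. by rewrite expnMn -expnM [t * d]mulnC. Qed.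

Lemma sub_pmm_sigma_2d n k d t : 0 < n -> 0 < k -> 0 < d -> t ^ d = k ->
  exists f : formula (pmm_var n k),
    [/\ monotone f, solves_sub_pmm f, fsize f <= k * n ^ (d * t),
        is_sigma (2 * d) f & (and_fanin f <= t) && (or_fanin f <= n ^ t)].
Proof.
case: n => // n _; case: k => // k _ d0; case: t => [|s] tk; first by rewrite exp0n in tk.
have lf := layered_walk_formula_id (@pmm_lit n.+1 k) s d 0 ord0 ord0 (ltn0Sn n).
exists (walk_formula (@pmm_lit n.+1 k) s id true d 0 ord0 ord0); split.
- exact: layered_monotone lf.
- by apply: solves_sub_pmm_walk => a fa; rewrite eval_walk_formula // tk.
- by rewrite (leq_trans (fsize_walk_formula _ _ _ _ _ _ _ _ (ltn0Sn n))) ?expnMn_expn ?tk.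
- exact: layered_sigma lf.
have /andP[-> fo] := fanin_walk_formula_id (@pmm_lit n.+1 k) s d 0 ord0 ord0.
by rewrite (leq_trans fo) // leq_pexp2l.
Qed.

Lemma sub_pmm_alternating_gt1 (b : bool) n k d t : 1 < n -> 0 < k -> 0 < d -> t ^ d = k ->
  exists f : formula (pmm_var n k),
    [/\ monotone f, solves_sub_pmm f, fsize f <= k * n ^ (d * t),
        (if b then is_sigma d.+1 f else is_pi d.+1 f) & fanin f <= t * n ^ t].
Proof.
case: n => // n n1; case: k => // k _; case: d => // d _.
case: t => [|s] tk; first by rewrite exp0n in tk.
have lf := layered_walk_formula_negb (@pmm_lit n.+1 k) s b d 0 ord0 ord0 (ltn0Sn n).
exists (walk_formula (@pmm_lit n.+1 k) s negb b d.+1 0 ord0 ord0); split.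
- exact: layered_monotone lf.
- by apply: solves_sub_pmm_walk => a fa; rewrite eval_walk_formula // tk.
- by rewrite (leq_trans (fsize_walk_formula _ _ _ _ _ _ _ _ (ltn0Sn n))) ?expnMn_expn ?tk.
- by case: b lf => [/layered_sigma|/layered_pi].
- exact: fanin_walk_formula_negb.
Qed.

Lemma sub_pmm_alternating_ord1 (b : bool) k d t : 0 < k -> 0 < d -> t ^ d = k ->
  exists f : formula (pmm_var 1 k),
    [/\ monotone f, solves_sub_pmm f, fsize f <= k * 1 ^ (d * t),
        (if b then is_sigma d.+1 f else is_pi d.+1 f) & fanin f <= t * 1 ^ t].
Proof.
case: k => // k _; case: d => // d _; case: t => [|s] tk; first by rewrite exp0n in tk.
pose f := and_tree s.+1 (fun i => @pmm_lit 1 k i ord0 ord0) d.+1 0.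
have solves_f : solves_sub_pmm f.
  by apply: solves_sub_pmm_walk => a _; rewrite eval_and_tree walk_ord1 tk.
have mf : monotone f by apply: monotone_and_tree.
have sf : fsize f = k.+1 by rewrite fsize_and_tree tk.
have df : depth f = d.+1 by apply: depth_and_tree.
have ff : fanin f <= s.+1 by apply: fanin_and_tree.
have af : is_and_gate f by [].
clearbody f; rewrite !exp1n !muln1.
exists (if b then f else FAnd [:: f]); case: b; split => //=.
- by rewrite sf.
- by rewrite df af eqxx !orbT.
- by rewrite mf.
- by move=> a sa; rewrite /= andbT; apply: solves_f.
- by rewrite addn0 sf.
- by rewrite maxn0 df eqxx orbT.
- by rewrite fanin_FAnd /= ff.
Qed.

Lemma sub_pmm_alternating (b : bool) n k d t : 0 < n -> 0 < k -> 0 < d -> t ^ d = k ->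
  exists f : formula (pmm_var n k),
    [/\ monotone f, solves_sub_pmm f, fsize f <= k * n ^ (d * t),
        (if b then is_sigma d.+1 f else is_pi d.+1 f) & fanin f <= t * n ^ t].
Proof.
case: n => [|[|n]] // _; first exact: sub_pmm_alternating_ord1.
exact: sub_pmm_alternating_gt1.
Qed.

Theorem proposition1p3 (n k d t : nat) :
  0 < n -> 0 < k -> 0 < d -> t ^ d = k ->
  (exists f : formula (pmm_var n k),
      [/\ monotone f, solves_sub_pmm f, fsize f <= k * n ^ (d * t),
          is_sigma (2 * d) f & (and_fanin f <= t) && (or_fanin f <= n ^ t)])
  /\
  (exists f : formula (pmm_var n k),
      [/\ monotone f, solves_sub_pmm f, fsize f <= k * n ^ (d * t),
          is_sigma d.+1 f & fanin f <= t * n ^ t])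
  /\
  (exists f : formula (pmm_var n k),
      [/\ monotone f, solves_sub_pmm f, fsize f <= k * n ^ (d * t),
          is_pi d.+1 f & fanin f <= t * n ^ t]).
Proof.
move=> n0 k0 d0 tk; split; first exact: sub_pmm_sigma_2d.
by split; [apply: (sub_pmm_alternating true) | apply: (sub_pmm_alternating false)].
Qed.
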